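(* Let $Q$ be a quiver with a contravariant involution $\sigma$. The category $\mathsf{Rep}_{\mathbb{F}_1}(Q)$, with the duality $(P,\Theta)$ described below, is combinatorial, has the finite direct decomposition property and satisfies the Reduction Assumption.
   Context: $\mathsf{Vect}_{\mathbb{F}_1}$: objects are finite pointed sets (basepoint $*$); morphisms are basepoint preserving maps $f:V\to W$ whose restriction to $V\setminus f^{-1}( * )$ is injective. Inflations are injective morphisms, deflations are surjective morphisms for which the preimage of each non-basepoint is a singleton; zero object $\{*\}$. The cokernel $V/U$ of $U\rightarrowtail V$ collapses $U$ to $*$. Coproduct $V\oplus V'$ is the wedge (disjoint union with basepoints identified). Duality $V^\vee=\mathrm{Hom}(V,\{*,1\})$, identified with $V$ via $v\mapsto\delta_v$, so $(-)^\vee$ squares to the identity. $\mathsf{Rep}_{\mathbb{F}_1}(Q)$: representations $(U=\bigoplus_{i\in Q_0}U_i,\{u_\alpha\}_{\alpha\in Q_1})$ with $U_i\in\mathsf{Vect}_{\mathbb{F}_1}$, finitely many non-zero, and morphisms $u_\alpha:U_i\to U_j$ for $\alpha:i\to j$; inflations, deflations, coproducts are defined pointwise in $Q_0$. A contravariant involution $\sigma$ consists of involutions of $Q_0$ and $Q_1$ with $\sigma(\alpha):\sigma(j)\to\sigma(i)$ for $\alpha:i\to j$. Duality: $P(U)_i=U^\vee_{\sigma(i)}$, $P(u)_\alpha=u^\vee_{\sigma(\alpha)}$, $P(\{\phi_i\})=\{\phi^\vee_{\sigma(i)}\}$, $\Theta=\mathrm{id}$. A symmetric form is $(N,\psi_N)$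 with $\psi_N:N\to P(N)$ an isomorphism and $P(\psi_N)\Theta_N=\psi_N$; isometries preserve $\psi$. For an inflation $j:U\rightarrowtail N$, $U^\perp$ is a kernel of $P(j)\psi_N$; $j$ is isotropic if $P(j)\psi_Nj=0$ and $U\to U^\perp$ is an inflation. Combinatorial: each inflation $j:U\rightarrowtail X_1\oplus X_2$ equals $(j_1\oplus j_2)\circ f$ for inflations $j_k:U_k\rightarrowtail X_k$ and an isomorphism $f:U\to U_1\oplus U_2$. Finite direct decomposition property: each object $W$ admits only finitely many decompositions $U\oplus V\simeq W$ up to isomorphism. Reduction Assumption: for each isotropic $U\rightarrowtail N$ with $k:U^\perp\rightarrowtail N$ and $\pi:U^\perp\twoheadrightarrow U^\perp/U=:N/\!\!/U$, there is a symmetric form $\psi_{N/\!\!/U}$, unique up to isometry, with $P(k)\psi_Nk=P(\pi)\psi_{N/\!\!/U}\pi$. *)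

From mathcomp Require Import all_boot.
Set Implicit Arguments. Unset Strict Implicit. Unset Printing Implicit Defensive.

(* A finite pointed set (object of Vect_F1) with basepoint * is modelled as  *)
(* [option A] for a finType A (None = basepoint).  A basepoint-preserving map        *)
(* option A -> option B is the same as a map f : A -> option B; it is a      *)
(* morphism of Vect_F1 iff it is injective off f^-1(basepoint).                      *)
(* A representation U = (+)_{i in Q0} U_i is modelled by the wedge of the    *)
(* U_i : one finite type rT of non-basepoint elements graded by deg : rT->Q0 *)
(* (U_i = elements of degree i, so only finitely many U_i are non-zero),     *)
(* together with the maps u_alpha, extended by basepoint outside U_{source alpha}.   *)

Record quiver := Quiver {
  Q0 : Type; Q1 : Type; qsrc : Q1 -> Q0; qtgt : Q1 -> Q0 }.

Record cinvol (Q : quiver) := CInvol {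
  s0 : Q0 Q -> Q0 Q;
  s1 : Q1 Q -> Q1 Q;
  s0K : involutive s0;
  s1K : involutive s1;
  src_s1 : forall a, qsrc (s1 a) = s0 (qtgt a);
  tgt_s1 : forall a, qtgt (s1 a) = s0 (qsrc a) }.

Record rep (Q : quiver) := Rep {
  rT :> finType;
  deg : rT -> Q0 Q;
  arr : Q1 Q -> rT -> option rT;
  arr_deg : forall a x y, arr a x = Some y -> deg x = qsrc a /\ deg y = qtgt a;
  arr_inj : forall a x x' y, arr a x = Some y -> arr a x' = Some y -> x = x' }.

Arguments arr {Q} r a x : rename.
Arguments deg {Q r} x : rename.

Section Rep.
Variable Q : quiver.
Implicit Types U V W : rep Q.

Definition comp (A B C : Type) (g : B -> option C) (f : A -> option B) : A -> option C :=
  fun x => obind g (f x).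

Definition zero_mor (A B : Type) : A -> option B := fun _ => None.
Arguments zero_mor {A B} _.

Definition is_morph U V (f : U -> option V) : Prop :=
  [/\ forall x y, f x = Some y -> deg y = deg x,
      forall x x' y, f x = Some y -> f x' = Some y -> x = x' &
      forall a x, comp f (arr U a) x = comp (arr V a) f x].

(* inflations: (pointwise) injective morphisms of pointed sets *)
Definition inflation U V (f : U -> option V) : Prop :=
  is_morph f /\ forall x, exists y, f x = Some y.

Definition deflation U V (f : U -> option V) : Prop :=
  is_morph f /\ forall y, exists! x, f x = Some y.

Definition is_iso U V (f : U -> option V) : Prop :=
  is_morph f /\ exists g : V -> option U,
    [/\ is_morph g, forall x, comp g f x = Some x & forall y, comp f g y = Some y].

Definition isomorphic U V : Prop := exists f : U -> option V, is_iso f.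

Definition sum_arr U V (a : Q1 Q) (z : (U + V)%type) : option (U + V)%type :=
  match z with
  | inl x => omap inl (arr U a x)
  | inr y => omap inr (arr V a y)
  end.

Definition sum_deg U V (z : (U + V)%type) : Q0 Q :=
  match z with inl x => deg x | inr y => deg y end.

Lemma sum_arr_deg U V a x y : sum_arr a x = Some y ->
  @sum_deg U V x = qsrc a /\ sum_deg y = qtgt a.
Proof.
case: x => [x|x] /=; case E: (arr _ a x) => [z|] //= [<-] /=;
  exact: arr_deg E.
Qed.

Lemma sum_arr_inj U V a x x' y :
  @sum_arr U V a x = Some y -> sum_arr a x' = Some y -> x = x'.
Proof.
case: x => [x|x]; case: x' => [x'|x'] /=;
  case E: (arr _ a x) => [z|] //=; case E': (arr _ a x') => [z'|] //= <- [] //;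
  move=> Hz; subst; by rewrite (arr_inj E E').
Qed.

Definition dsum U V : rep Q :=
  @Rep Q (U + V)%type (@sum_deg U V) (@sum_arr U V)
       (@sum_arr_deg U V) (@sum_arr_inj U V).

Definition sum_mor U U' V V' (f : U -> option V) (g : U' -> option V')
  : dsum U U' -> option (dsum V V') :=
  fun z => match z with inl x => omap inl (f x) | inr y => omap inr (g y) end.

Definition is_kernel (K N M : rep Q) (k : K -> option N) (f : N -> option M) : Prop :=
  [/\ is_morph k, comp f k =1 @zero_mor _ M &
      forall (T : rep Q) (g : T -> option N), is_morph g ->
        comp f g =1 @zero_mor _ M ->
        exists h : T -> option K, [/\ is_morph h, comp k h =1 g &
           forall h' : T -> option K, is_morph h' -> comp k h' =1 g -> h' =1 h]].

Definition is_cokernel (N C M : rep Q) (p : N -> option C) (f : M -> option N) : Prop :=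
  [/\ is_morph p, comp p f =1 @zero_mor _ C &
      forall (T : rep Q) (g : N -> option T), is_morph g ->
        comp g f =1 @zero_mor _ T ->
        exists h : C -> option T, [/\ is_morph h, comp h p =1 g &
           forall h' : C -> option T, is_morph h' -> comp h' p =1 g -> h' =1 h]].

Definition combinatorial : Prop :=
  forall U X1 X2 (j : U -> option (dsum X1 X2)), inflation j ->
    exists (U1 U2 : rep Q) (j1 : U1 -> option X1) (j2 : U2 -> option X2)
           (f : U -> option (dsum U1 U2)),
      [/\ inflation j1, inflation j2, is_iso f & j =1 comp (sum_mor j1 j2) f].

Definition finite_direct_decomposition : Prop :=
  forall W, exists (n : nat) (D : 'I_n -> rep Q * rep Q),
    forall U V, isomorphic (dsum U V) W ->
      exists k, isomorphic U (D k).1 /\ isomorphic V (D k).2.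

End Rep.

(* Duality.  V^vee = Hom(V,{*,1}) is identified with V via v |-> delta_v;   *)
(* under this identification the dual f^vee : W -> V of f : V -> W sends w   *)
(* to the v with delta_w o f = delta_v, i.e. the (unique) v with f v = w,    *)
(* and to the basepoint if there is none.                                                *)
Definition dualf (A B : finType) (f : A -> option B) : B -> option A :=
  fun y => [pick x | f x == Some y].

Lemma dualfP (A B : finType) (f : A -> option B) y x :
  dualf f y = Some x -> f x = Some y.
Proof. by rewrite /dualf; case: pickP => // z /eqP Hz [<-]. Qed.

Section Duality.
Variables (Q : quiver) (sg : cinvol Q).

Definition Pdeg (U : rep Q) (x : U) : Q0 Q := s0 sg (deg x).
Definition Parr (U : rep Q) (a : Q1 Q) : U -> option U := dualf (arr U (s1 sg a)).

Lemma Parr_deg U a x y : Parr a x = Some y -> Pdeg x = qsrc a /\ @Pdeg U y = qtgt a.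
Proof.
move=> /dualfP /arr_deg [Hy Hx]; rewrite /Pdeg Hx Hy src_s1 tgt_s1.
by rewrite !(s0K sg).
Qed.

Lemma Parr_inj U a x x' y : @Parr U a x = Some y -> Parr a x' = Some y -> x = x'.
Proof. move=> /dualfP H1 /dualfP; rewrite H1; by case. Qed.

(* P(U)_i = U^vee_{sigma i},  P(u)_alpha = u^vee_{sigma alpha} *)
Definition Pobj (U : rep Q) : rep Q :=
  @Rep Q (rT U) (@Pdeg U) (@Parr U) (@Parr_deg U) (@Parr_inj U).

Definition Pmor (U V : rep Q) (f : U -> option V) : Pobj V -> option (Pobj U) :=
  dualf f.

Definition Theta (U : rep Q) : U -> option (Pobj (Pobj U)) := fun x => Some x.

Definition symmetric_form (N : rep Q) (psi : N -> option (Pobj N)) : Prop :=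
  is_iso (V := Pobj N) psi /\ comp (Pmor psi) (@Theta N) =1 psi.

Definition isometric (N : rep Q) (psi1 psi2 : N -> option (Pobj N)) : Prop :=
  exists phi : N -> option N,
    is_iso phi /\ comp (comp (Pmor phi) psi2) phi =1 psi1.

Definition reduction_assumption : Prop :=
  forall (N : rep Q) (psiN : N -> option (Pobj N)), symmetric_form psiN ->
  forall (U : rep Q) (j : U -> option N), inflation j ->
    comp (comp (Pmor j) psiN) j =1 @zero_mor _ (Pobj U) ->
  forall (Up : rep Q) (k : Up -> option N),
    is_kernel k (comp (Pmor j) psiN) ->
  forall i : U -> option Up, is_morph i -> comp k i =1 j -> inflation i ->
  forall (C : rep Q) (pi : Up -> option C), is_cokernel pi i ->
    exists psiC : C -> option (Pobj C),
      [/\ symmetric_form psiC,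
          comp (comp (Pmor k) psiN) k =1 comp (comp (Pmor pi) psiC) pi &
          forall psi' : C -> option (Pobj C), symmetric_form psi' ->
            comp (comp (Pmor k) psiN) k =1 comp (comp (Pmor pi) psi') pi ->
            isometric psiC psi'].

End Duality.

From mathcomp Require Import all_boot.
Set Implicit Arguments. Unset Strict Implicit. Unset Printing Implicit Defensive.

(* A morphism of F_1-representations is a partial injection of the underlying
   finite sets commuting with the arrows, so all three properties are
   statements about finite sets.  A subset S of a representation such that S
   and its complement are both closed under the arrows splits it as the sum of
   the two subrepresentations they carry: for an inflation into X1 (+) X2 take
   S the preimage of X1, and the decompositions of W are indexed, up to
   isomorphism, by the subsets of W.  Kernels are zero loci and cokernels
   collapse images.  A symmetric form is an involution of the underlying set;
   restricted to the kernel U^perp it is undefined exactly on the image of U,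
   so it descends along the surjection U^perp -> N//U to an involution of the
   quotient, and it is unique because that surjection is epic and its dual is
   monic. *)

Definition oinjective (X Y : Type) (f : X -> option Y) : Prop :=
  forall x x' y, f x = Some y -> f x' = Some y -> x = x'.
Definition ototal (X Y : Type) (f : X -> option Y) : Prop :=
  forall x, exists y, f x = Some y.
Definition osurjective (X Y : Type) (f : X -> option Y) : Prop :=
  forall y, exists x, f x = Some y.

Lemma dualf_eq (X Y : finType) (f : X -> option Y) x y :
  oinjective f -> f x = Some y -> dualf f y = Some x.
Proof.
move=> f_inj fx; rewrite /dualf; case: pickP => [z /eqP fz|/(_ x)].
  by rewrite (f_inj _ _ _ fz fx).
by rewrite fx eqxx.
Qed.

Lemma dualf_None (X Y : finType) (f : X -> option Y) x y :
  dualf f y = None -> f x <> Some y.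
Proof. by rewrite /dualf; case: pickP => // /(_ x) + _ fx; rewrite fx eqxx. Qed.

Lemma dualf_id (X : finType) : dualf (@Some X) =1 @Some X.
Proof. by move=> x; apply: dualf_eq => // ? ? ? [->] []. Qed.

Lemma insub_SomeK (T : Type) (P : pred T) (sT : subType P) x (s : sT) :
  insub x = Some s -> val s = x.
Proof. by move=> e; have := insubK sT x; rewrite e. Qed.

Section Morphisms.
Variable Q : quiver.
Implicit Types A B C U V : rep Q.

Lemma is_morph_comp A B C (f : A -> option B) (g : B -> option C) :
  is_morph f -> is_morph g -> is_morph (comp g f).
Proof.
case=> f_deg f_inj f_arr [g_deg g_inj g_arr]; split; rewrite /comp.
- by move=> x z; case fx: (f x) => [y|] //= /g_deg ->; apply: f_deg fx.
- move=> x x' z; case fx: (f x) => [y|] //= gy; case fx': (f x') => [y'|] //= gy'.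
  by apply: f_inj fx _; rewrite fx' (g_inj _ _ _ gy gy').
- move=> a x; have := f_arr a x; rewrite /comp.
  case: (f x) => [y|] /= e; last by case: (arr A a x) e => //= x1 ->.
  by have := g_arr a y; rewrite /comp -e; case: (arr A a x).
Qed.

Lemma is_morph_id A : is_morph (@Some A).
Proof.
split=> [x y [<-] | x x' y [->] [] | a x] //.
by rewrite /comp /=; case: (arr A a x).
Qed.

Lemma is_isoP A B (f : A -> option B) :
  is_iso f <-> [/\ is_morph f, ototal f & osurjective f].
Proof.
split.
  case=> f_morph [g [_ gf fg]]; split=> //.
    by move=> x; move: (gf x); rewrite /comp; case: (f x) => [y|]; [exists y|].
  by move=> y; move: (fg y); rewrite /comp; case: (g y) => //= x fx; exists x.
case=> f_morph f_tot f_onto; split=> //; have [f_deg f_inj f_arr] := f_morph.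
have dualfK x : comp (dualf f) f x = Some x.
  by have [y fx] := f_tot x; rewrite /comp fx; apply: dualf_eq.
have fK y : comp f (dualf f) y = Some y.
  by have [x fx] := f_onto y; rewrite /comp (dualf_eq f_inj fx).
exists (dualf f); split=> //; split.
- by move=> y x /dualfP /f_deg.
- by move=> y y' x /dualfP fx /dualfP; rewrite fx => -[].
- move=> a y; have [x fx] := f_onto y.
  rewrite /comp (dualf_eq f_inj fx) /=; have := f_arr a x; rewrite /comp fx /=.
  by case: (arr A a x) => [x1|] /= <- //; rewrite -/(comp (dualf f) f x1) dualfK.
Qed.

Definition lproj U V (z : dsum U V) : option U := if z is inl x then Some x else None.
Definition rproj U V (z : dsum U V) : option V := if z is inr y then Some y else None.

Lemma is_morph_inl U V : is_morph (fun x : U => Some (inl x) : option (dsum U V)).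
Proof. by split=> [x y [<-] | x x' y [<-] [] | a x]. Qed.

Lemma is_morph_inr U V : is_morph (fun y : V => Some (inr y) : option (dsum U V)).
Proof. by split=> [x y [<-] | x x' y [<-] [] | a x]. Qed.

Lemma is_morph_lproj U V : is_morph (@lproj U V).
Proof.
split=> [[x|x] // y [<-] | [x|x] [x'|x'] // y [->] [->] | a [x|x]] //;
  by rewrite /comp /=; case: (arr _ a x).
Qed.

Lemma is_morph_rproj U V : is_morph (@rproj U V).
Proof.
split=> [[x|x] // y [<-] | [x|x] [x'|x'] // y [->] [->] | a [x|x]] //;
  by rewrite /comp /=; case: (arr _ a x).
Qed.

End Morphisms.

Section Subrepresentations.
Variable Q : quiver.
Implicit Types A B : rep Q.

Definition arr_closed A (S : {set A}) : Prop :=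
  forall a x y, x \in S -> arr A a x = Some y -> y \in S.

Definition sub_arr A (S : {set A}) (a : Q1 Q) (s : {x : A | x \in S})
  : option {x : A | x \in S} := obind insub (arr A a (val s)).

Lemma sub_arrE A (S : {set A}) a s t :
  @sub_arr A S a s = Some t -> arr A a (val s) = Some (val t).
Proof. by rewrite /sub_arr; case: (arr A a _) => //= y; case: insubP => // u _ <- [<-]. Qed.

Lemma sub_arr_deg A (S : {set A}) a s t : @sub_arr A S a s = Some t ->
  deg (val s) = qsrc a /\ deg (val t) = qtgt a.
Proof. by move/sub_arrE; apply: arr_deg. Qed.

Lemma sub_arr_inj A (S : {set A}) a s s' t :
  @sub_arr A S a s = Some t -> sub_arr a s' = Some t -> s = s'.
Proof. by move=> /sub_arrE e /sub_arrE e'; apply: val_inj; apply: arr_inj e e'. Qed.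

Definition subrep A (S : {set A}) : rep Q :=
  @Rep Q {x : A | x \in S} (fun s => deg (val s)) (@sub_arr A S)
    (@sub_arr_deg A S) (@sub_arr_inj A S).

Lemma is_morph_val A (S : {set A}) :
  arr_closed S -> is_morph (fun s : subrep S => Some (val s)).
Proof.
move=> S_closed; split=> [s x [<-] | s s' x [<-] [] /val_inj | a s] //.
rewrite /comp /= /sub_arr; case e: (arr A a (val s)) => [y|] //=.
by rewrite insubT //; apply: S_closed e; apply: valP.
Qed.

Lemma is_morph_insub A (S : {set A}) :
  arr_closed (~: S) -> is_morph (fun x : A => insub x : option (subrep S)).
Proof.
move=> SC_closed; split.
- by move=> x s e; rewrite -(insub_SomeK e).
- by move=> x x' s e e'; rewrite -(insub_SomeK e) -(insub_SomeK e').
- move=> a x; rewrite /comp /= /sub_arr; case: insubP => [s _ <- //| xNS].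
  case e: (arr A a x) => [y|] //=; rewrite insubF //; apply/negbTE.
  by rewrite -in_setC; apply: SC_closed e; rewrite in_setC.
Qed.

Lemma is_morph_corestrict A B (S : {set B}) (h : A -> option B) :
  is_morph h -> (forall x y, h x = Some y -> y \in S) ->
  is_morph (fun x => obind insub (h x) : option (subrep S)).
Proof.
case=> h_deg h_inj h_arr h_S; split.
- move=> x s; case hx: (h x) => [y|] //= e.
  by rewrite /= (insub_SomeK e); apply: h_deg hx.
- move=> x x' s; case hx: (h x) => [y|] //= e; case hx': (h x') => [y'|] //= e'.
  by apply: h_inj hx _; rewrite hx' -(insub_SomeK e) -(insub_SomeK e').
- move=> a x; have := h_arr a x; rewrite /comp.
  case hx: (h x) => [y|] /= e; last by case: (arr A a x) e => //= x1 ->.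
  have yS := h_S _ _ hx.
  by rewrite insubT /= /sub_arr /= -e; case: (arr A a x).
Qed.

Lemma is_morph_restrict A B (S : {set A}) (h : A -> option B) :
  is_morph h -> (forall x, x \notin S -> h x = None) ->
  is_morph (fun s : subrep S => h (val s)).
Proof.
case=> h_deg h_inj h_arr h_S; split.
- by move=> s y /h_deg.
- by move=> s s' y hs hs'; apply: val_inj; apply: h_inj hs hs'.
- move=> a s; have := h_arr a (val s); rewrite /comp /= /sub_arr => <-.
  case: (arr A a (val s)) => [y|] //=.
  by case: insubP => [t _ <- // | yNS]; rewrite h_S.
Qed.

Definition image_set A B (h : A -> option B) : {set B} :=
  [set y | [exists x, h x == Some y]].

Lemma image_setP A B (h : A -> option B) y :
  reflect (exists x, h x = Some y) (y \in image_set h).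
Proof. by rewrite inE; apply: (iffP existsP) => -[x /eqP hx]; exists x => //; apply/eqP. Qed.

Lemma arr_closed_image A B (h : A -> option B) : is_morph h -> arr_closed (image_set h).
Proof.
case=> _ _ h_arr a y y' /image_setP [x hx] e.
have := h_arr a x; rewrite /comp hx /= e.
by case: (arr A a x) => //= x1 hx1; apply/image_setP; exists x1.
Qed.

Lemma image_set_iso A B (h : A -> option B) :
  is_morph h -> ototal h -> isomorphic A (subrep (image_set h)).
Proof.
move=> h_morph h_tot.
have h_S x y : h x = Some y -> y \in image_set h by move=> hx; apply/image_setP; exists x.
exists (fun x => obind insub (h x)); apply/is_isoP; split.
- exact: is_morph_corestrict.
- move=> x; have [y hx] := h_tot x.
  by rewrite hx /= (insubT (fun y => y \in image_set h) (h_S _ _ hx)); eexists.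
- by move=> s; have /image_setP [x hx] := valP s; exists x; rewrite hx /= valK.
Qed.

Definition split_subrep A (S : {set A}) (x : A)
  : option (dsum (subrep S) (subrep (~: S))) :=
  if insub x is Some s then Some (inl s) else omap inr (insub x).

Lemma split_subrep_in A (S : {set A}) x (xS : x \in S) :
  split_subrep S x = Some (inl (Sub x xS)).
Proof. by rewrite /split_subrep (insubT (fun x => x \in S) xS). Qed.

Lemma split_subrep_out A (S : {set A}) x (xNS : x \in ~: S) :
  split_subrep S x = Some (inr (Sub x xNS)).
Proof.
by rewrite /split_subrep insubN -?in_setC // (insubT (fun x => x \in ~: S) xNS).
Qed.

Lemma split_subrep_iso A (S : {set A}) :
  arr_closed S -> arr_closed (~: S) -> is_iso (split_subrep S).
Proof.
move=> S_closed SC_closed.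
have splitP x : {s | split_subrep S x = Some (inl s) & val s = x}
              + {s | split_subrep S x = Some (inr s) & val s = x}.
  have [xS|xNS] := boolP (x \in S); [left|right; rewrite -in_setC in xNS].
    by exists (Sub x xS); rewrite ?split_subrep_in.
  by exists (Sub x xNS); rewrite ?split_subrep_out.
apply/is_isoP; split.
- split.
  + by move=> x z; case: (splitP x) => -[s -> <-] [<-].
  + move=> x x' z; case: (splitP x) => -[s -> <-] <-;
      by case: (splitP x') => -[s' -> <-] // [->].
  + move=> a x; rewrite /comp.
    case: (splitP x) => -[s -> <-] /=; rewrite /sub_arr;
      case e: (arr A a (val s)) => [y|] //=.
      have yS := S_closed _ _ _ (valP s) e.
      by rewrite (split_subrep_in yS) (insubT (fun y => y \in S) yS).
    have yNS := SC_closed _ _ _ (valP s) e.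
    by rewrite (split_subrep_out yNS) (insubT (fun y => y \in ~: S) yNS).
- by move=> x; case: (splitP x) => -[s -> _]; eexists.
- move=> [s|s]; exists (val s); case: (splitP (val s)) => -[t -> e].
  + by rewrite (val_inj e).
  + by have := valP t; rewrite e in_setC (valP s).
  + by have := valP s; rewrite -e in_setC (valP t).
  + by rewrite (val_inj e).
Qed.

End Subrepresentations.

Section Decompositions.
Variable Q : quiver.
Implicit Types A B U V : rep Q.

Definition preim_set A B (h : A -> option B) (S : {set B}) : {set A} :=
  [set x | oapp (fun y => y \in S) false (h x)].

Lemma arr_closed_preim A B (h : A -> option B) (S : {set B}) :
  is_morph h -> ototal h -> arr_closed S -> arr_closed (preim_set h S).
Proof.
case=> _ _ h_arr h_tot S_closed a x x'; rewrite !inE => + e.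
case hx: (h x) => [y|] //= yS; have [y' hx'] := h_tot x'.
have := h_arr a x; rewrite /comp e hx /= hx' => /esym e'.
exact: S_closed e'.
Qed.

Lemma preim_setC A B (h : A -> option B) (S : {set B}) :
  ototal h -> ~: preim_set h S = preim_set h (~: S).
Proof. by move=> h_tot; apply/setP => x; have [y hx] := h_tot x; rewrite !inE hx /= inE. Qed.

Definition inl_set U V : {set dsum U V} := [set z | if z is inl _ then true else false].

Lemma arr_closed_inl_set U V : arr_closed (inl_set U V).
Proof. by move=> a [x|x] z; rewrite !inE //=; case: (arr _ a x) => //= x' _ [<-]. Qed.

Lemma arr_closed_inl_setC U V : arr_closed (~: inl_set U V).
Proof. by move=> a [x|x] z; rewrite !inE //=; case: (arr _ a x) => //= x' _ [<-]. Qed.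

Lemma combinatorial_rep : combinatorial Q.
Proof.
move=> U X1 X2 j [j_morph j_tot].
pose S := preim_set j (inl_set X1 X2).
have S_closed : arr_closed S.
  by apply: arr_closed_preim => //; apply: arr_closed_inl_set.
have SC_closed : arr_closed (~: S).
  by rewrite preim_setC //; apply: arr_closed_preim => //; apply: arr_closed_inl_setC.
pose jS (T : {set U}) := comp j (fun s : subrep T => Some (val s)).
have jS_morph T : arr_closed T -> is_morph (jS T).
  by move=> T_closed; apply: is_morph_comp j_morph; apply: is_morph_val.
exists (subrep S), (subrep (~: S)), (comp (@lproj _ _ _) (jS S)),
  (comp (@rproj _ _ _) (jS (~: S))), (split_subrep S); split.
- split; first by apply: is_morph_comp (is_morph_lproj _ _); apply: jS_morph.
  move=> s; have := valP s; rewrite /S /inl_set !inE.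
  case: (j_tot (val s)) => -[y|y] jx; rewrite jx /= inE // => _.
  by exists y; rewrite /jS /comp /= jx.
- split; first by apply: is_morph_comp (is_morph_rproj _ _); apply: jS_morph.
  move=> s; have := valP s; rewrite /S /inl_set !inE.
  case: (j_tot (val s)) => -[y|y] jx; rewrite jx /= inE // => _.
  by exists y; rewrite /jS /comp /= jx.
- exact: split_subrep_iso.
- move=> x; have [[y|y] jx] := j_tot x.
  + have xS : x \in S by rewrite !inE jx /= !inE.
    by rewrite /comp (split_subrep_in xS) /= /jS /comp /= jx.
  + have xNS : x \in ~: S by rewrite !inE jx /= !inE.
    by rewrite /comp (split_subrep_out xNS) /= /jS /comp /= jx.
Qed.

Lemma finite_direct_decomposition_rep : finite_direct_decomposition Q.
Proof.
move=> W; exists #|{: {set W}}|, (fun k => (subrep (enum_val k), subrep (~: enum_val k))).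
move=> U V [f /is_isoP [f_morph f_tot f_onto]].
have [_ f_inj _] := f_morph.
pose fl := comp f (fun x : U => Some (inl x) : option (dsum U V)).
pose fr := comp f (fun y : V => Some (inr y) : option (dsum U V)).
have flC : ~: image_set fl = image_set fr.
  apply/setP => w; rewrite in_setC; have [[x|y] fz] := f_onto w.
  + have -> : w \in image_set fl by apply/image_setP; exists x.
    by apply/esym/negbTE/image_setP => -[y /(f_inj _ _ _ fz)].
  + have -> : w \in image_set fr by apply/image_setP; exists y.
    by apply/negP => /image_setP [x /(f_inj _ _ _ fz)].
exists (enum_rank (image_set fl)); rewrite /= enum_rankK flC.
split; apply: image_set_iso.
- exact: is_morph_comp (is_morph_inl _ _) f_morph.
- by move=> x; apply: f_tot.
- exact: is_morph_comp (is_morph_inr _ _) f_morph.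
- by move=> y; apply: f_tot.
Qed.

End Decompositions.

Section Kernel.
Variables (Q : quiver) (N M K : rep Q) (f : N -> option M) (k : K -> option N).
Hypotheses (f_morph : is_morph f) (k_ker : is_kernel k f).

Definition zero_set : {set N} := [set x | f x == None].

Lemma arr_closed_zero_set : arr_closed zero_set.
Proof.
case: f_morph => _ _ f_arr a x y; rewrite !inE => /eqP fx e.
by have := f_arr a x; rewrite /comp e fx /= => ->.
Qed.

Lemma kernel_mono (T : rep Q) (h1 h2 : T -> option K) :
  is_morph h1 -> is_morph h2 -> comp k h1 =1 comp k h2 -> h1 =1 h2.
Proof.
case: k_ker => k_morph fk0 k_univ h1_morph h2_morph e.
have fkh0 : comp f (comp k h1) =1 @zero_mor _ M.
  by move=> x; rewrite /comp; case: (h1 x) => //= y; apply: fk0.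
have [h [_ _ h_uniq]] := k_univ T _ (is_morph_comp h1_morph k_morph) fkh0.
by move=> x; rewrite (h_uniq h1) // (h_uniq h2) // => y; rewrite e.
Qed.

Lemma kernel_factor_zero_set :
  exists2 h : subrep zero_set -> option K, is_morph h & forall s, comp k h s = Some (val s).
Proof.
case: k_ker => _ _ k_univ.
have incl_morph := is_morph_val arr_closed_zero_set.
have [|h [h_morph kh _]] := k_univ _ _ incl_morph.
  by move=> s; have := valP s; rewrite inE /comp /= => /eqP.
by exists h.
Qed.

Lemma kernel_image z : f z = None -> exists x, k x = Some z.
Proof.
move=> fz; have zS : z \in zero_set by rewrite inE fz.
have [h _ kh] := kernel_factor_zero_set.
by have := kh (Sub z zS); rewrite /comp /=; case: (h _) => //= x kx; exists x.
Qed.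

Lemma kernel_inflation : inflation k.
Proof.
have [k_morph fk0 _] := k_ker; split=> // x.
have kS x' z : k x' = Some z -> z \in zero_set.
  by move=> kx'; rewrite inE; have := fk0 x'; rewrite /comp kx' /= => ->.
pose k' x' := obind insub (k x') : option (subrep zero_set).
have k'_morph : is_morph k' := is_morph_corestrict k_morph kS.
have [h h_morph kh] := kernel_factor_zero_set.
have hk' : comp h k' =1 @Some K.
  apply: kernel_mono (is_morph_comp k'_morph h_morph) (is_morph_id K) _ => x'.
  rewrite /comp /k' /=; case kx': (k x') => [z|] //=.
  by rewrite (insubT (fun z => z \in zero_set) (kS _ _ kx')); apply: kh.
by have := hk' x; rewrite /comp /k'; case: (k x) => [z|] //=; exists z.
Qed.

End Kernel.

Section Cokernel.
Variables (Q : quiver) (U A C : rep Q) (i : U -> option A) (pi : A -> option C).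
Hypotheses (i_morph : is_morph i) (pi_coker : is_cokernel pi i).

Lemma cokernel_epi (T : rep Q) (h1 h2 : C -> option T) :
  is_morph h1 -> is_morph h2 -> comp h1 pi =1 comp h2 pi -> h1 =1 h2.
Proof.
case: pi_coker => pi_morph pi0 pi_univ h1_morph h2_morph e.
have hpi0 : comp (comp h1 pi) i =1 @zero_mor _ T.
  by move=> u; rewrite /comp; have := pi0 u; rewrite /comp; case: (i u) => //= x ->.
have [h [_ _ h_uniq]] := pi_univ T _ (is_morph_comp pi_morph h1_morph) hpi0.
by move=> c; rewrite (h_uniq h1) // (h_uniq h2) // => x; rewrite e.
Qed.

Lemma cokernel_factor_coimage :
  exists2 h : C -> option (subrep (~: image_set i)), is_morph h &
    forall x, comp h pi x = insub x.
Proof.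
case: pi_coker => _ _ pi_univ.
have proj_morph : is_morph (fun x : A => insub x : option (subrep (~: image_set i))).
  by apply: is_morph_insub; rewrite setCK; apply: arr_closed_image.
have [|h [h_morph hpi _]] := pi_univ _ _ proj_morph.
  move=> u; rewrite /comp; case iu: (i u) => [x|] //=.
  by rewrite insubN // in_setC negbK; apply/image_setP; exists u.
by exists h.
Qed.

Lemma cokernel_None x : pi x = None <-> x \in image_set i.
Proof.
split=> [pix | /image_setP [u iu]].
  have [h _ hpi] := cokernel_factor_coimage.
  by have := hpi x; rewrite /comp pix /=; case: insubP => //; rewrite in_setC negbK.
by case: pi_coker => _ pi0 _; have := pi0 u; rewrite /comp iu.
Qed.

Lemma cokernel_onto : osurjective pi.
Proof.
have [pi_morph _ _] := pi_coker.
have [h h_morph hpi] := cokernel_factor_coimage.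
pose pi' (s : subrep (~: image_set i)) := pi (val s).
have pi'_morph : is_morph pi'.
  by apply: is_morph_restrict => // x; rewrite in_setC negbK => /(cokernel_None x).2.
have hpi' : comp pi' h =1 @Some C.
  apply: cokernel_epi (is_morph_comp h_morph pi'_morph) (is_morph_id C) _ => x.
  transitivity (obind pi' (insub x)); first by rewrite -hpi /comp; case: (pi x).
  transitivity (pi x); last by rewrite /comp; case: (pi x).
  case: insubP => [s _ <- // | ].
  by rewrite in_setC negbK => /(cokernel_None x).2 ->.
by move=> c; have := hpi' c; rewrite /comp; case: (h c) => //= s pis; exists (val s).
Qed.

End Cokernel.

Lemma option_eqP (T : Type) (o1 o2 : option T) :
  (forall w, o1 = Some w <-> o2 = Some w) -> o1 = o2.
Proof.
case: o1 => [w|] e; first by apply/esym/(e w).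
by case: o2 e => // w /(_ w) [_ /(_ erefl)].
Qed.

Section Duality.
Variables (Q : quiver) (sg : cinvol Q).
Implicit Types A C N U V : rep Q.

Lemma is_morph_Pmor U V (f : U -> option V) : is_morph f -> is_morph (Pmor (sg := sg) f).
Proof.
case=> f_deg f_inj f_arr; split.
- by move=> y x /dualfP /f_deg; rewrite /= /Pdeg => ->.
- by move=> y y' x /dualfP fx /dualfP; rewrite fx => -[].
- move=> a y; apply: option_eqP => w; rewrite /comp /= /Parr /Pmor; set b := s1 sg a.
  split.
    case ay: (dualf (arr V b) y) => [y'|] //= /dualfP fw; move/dualfP: ay => ay.
    have := f_arr b w; rewrite /comp fw /= ay.
    case aw: (arr U b w) => [x|] //= fx.
    by rewrite (dualf_eq f_inj fx) /= (dualf_eq (@arr_inj _ _ b) aw).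
  case fy: (dualf f y) => [x|] //= /dualfP aw; move/dualfP: fy => fx.
  have := f_arr b w; rewrite /comp aw /= fx.
  case fw: (f w) => [y'|] //= ay.
  by rewrite (dualf_eq (@arr_inj _ _ b) (esym ay)) /= (dualf_eq f_inj fw).
Qed.

Lemma symmetric_formP N (psi : N -> option (Pobj sg N)) :
  symmetric_form psi <->
  is_morph psi /\ forall x, exists y, psi x = Some y /\ psi y = Some x.
Proof.
split.
  case=> /is_isoP [psi_morph psi_tot _] psi_sym; split=> // x.
  have [y psix] := psi_tot x; exists y; split=> //.
  by apply: dualfP; have := psi_sym x; rewrite /comp /Theta /= psix.
case=> psi_morph psi_invol; split.
  apply/is_isoP; split=> // x; have [y [psix psiy]] := psi_invol x.
    by exists y.
  by exists y.
move=> x; have [y [psix psiy]] := psi_invol x.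
by rewrite /comp /Theta /= psix /Pmor; apply: dualf_eq psiy; case: psi_morph.
Qed.

Lemma eq_isometric N (psi1 psi2 : N -> option (Pobj sg N)) :
  psi2 =1 psi1 -> isometric psi1 psi2.
Proof.
move=> e; exists (@Some N); split.
  by apply/is_isoP; split=> [|x|y]; [exact: is_morph_id | exists x | exists y].
by move=> x; rewrite /comp /= e; case: (psi1 x) => //= y; rewrite /Pmor dualf_id.
Qed.

Lemma Pmor_cancel A C (pi : A -> option C) (psi1 psi2 : C -> option (Pobj sg C)) :
  osurjective pi ->
  comp (comp (Pmor pi) psi1) pi =1 comp (comp (Pmor pi) psi2) pi -> psi1 =1 psi2.
Proof.
move=> pi_onto e c; have [x pix] := pi_onto c; have := e x; rewrite /comp pix /= /Pmor.
have dualf_pi c' : exists2 x', dualf pi c' = Some x' & pi x' = Some c'.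
  have [x' pix'] := pi_onto c'; case E: (dualf pi c') => [x''|].
    by exists x'' => //; apply: dualfP.
  by case: (dualf_None E pix').
case: (psi1 c) => [c1|]; case: (psi2 c) => [c2|] //=.
- have [x1 -> pix1] := dualf_pi c1; have [x2 -> pix2] := dualf_pi c2.
  by case=> e12; move: pix1; rewrite e12 pix2 => -[->].
- by have [x1 -> _] := dualf_pi c1.
- by have [x2 -> _] := dualf_pi c2.
Qed.

Lemma Parr_deflation A C (pi : A -> option C) a y c :
  is_morph pi -> osurjective pi -> pi y = Some c ->
  obind pi (Parr sg a y) = Parr sg a c.
Proof.
case=> _ pi_inj pi_arr pi_onto piy; rewrite /Parr; set b := s1 sg a.
case E: (dualf (arr A b) y) => [x|] /=.
  move/dualfP: E => axy; have := pi_arr b x; rewrite /comp axy /= piy.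
  case: (pi x) => [c'|] //= e.
  by apply/esym/dualf_eq; [apply: arr_inj | rewrite e].
case E': (dualf (arr C b) c) => [c'|] //; move/dualfP: E' => acc'.
have [x pix] := pi_onto c'; have := pi_arr b x; rewrite /comp pix /= acc'.
case axy': (arr A b x) => [y'|] //= piy'.
by move: axy'; rewrite (pi_inj _ _ _ piy' piy); move/(dualf_None E).
Qed.

End Duality.

Section QuotientForm.
Variables (Q : quiver) (sg : cinvol Q) (A C : rep Q).
Variables (pi : A -> option C) (M : A -> option (Pobj sg A)).
Hypotheses (pi_morph : is_morph pi) (pi_onto : osurjective pi) (M_morph : is_morph M).
Hypotheses (M_None : forall x, M x = None <-> pi x = None)
  (M_invol : forall x y, M x = Some y -> M y = Some x).

Definition quotient_form (c : C) : option (Pobj sg C) :=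
  obind (fun x => obind pi (M x)) (dualf pi c).

Lemma quotient_form_pi : comp quotient_form pi =1 comp pi M.
Proof.
have [_ pi_inj _] := pi_morph.
move=> x; rewrite /comp; case pix: (pi x) => [c|] /=.
  by rewrite /quotient_form (dualf_eq pi_inj pix).
by have /M_None -> := pix.
Qed.

Lemma quotient_form_spec c : exists x y c',
  [/\ pi x = Some c, M x = Some y, pi y = Some c' & quotient_form c = Some c'].
Proof.
have [x pix] := pi_onto c.
case Mx: (M x) => [y|]; last by move/M_None: Mx; rewrite pix.
case piy: (pi y) => [c'|]; last by move/M_None: piy; rewrite (M_invol Mx).
by exists x, y, c'; split=> //; have := quotient_form_pi x; rewrite /comp pix Mx /= piy.
Qed.

Lemma quotient_form_invol c c' : quotient_form c = Some c' -> quotient_form c' = Some c.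
Proof.
have [x [y [c'' [pix Mx piy ->]]]] := quotient_form_spec c; case=> <-.
by have := quotient_form_pi y; rewrite /comp piy (M_invol Mx) /= pix.
Qed.

Lemma quotient_form_morph : is_morph quotient_form.
Proof.
have [M_deg _ M_arr] := M_morph; have [pi_deg _ pi_arr] := pi_morph.
split.
- move=> c c'; have [x [y [c'' [pix Mx piy ->]]]] := quotient_form_spec c; case=> <-.
  by rewrite /= /Pdeg (pi_deg _ _ piy) (pi_deg _ _ pix); apply: M_deg Mx.
- by move=> c1 c2 c' /quotient_form_invol e1 /quotient_form_invol; rewrite e1 => -[].
- move=> a c; rewrite /comp; have [x [y [c' [pix Mx piy ->]]]] := quotient_form_spec c.
  have := pi_arr a x; rewrite /comp pix /= => <-.
  transitivity (obind pi (obind M (arr A a x))).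
    by case: (arr A a x) => //= x1; apply: quotient_form_pi.
  have := M_arr a x; rewrite /comp Mx /= => ->.
  exact: Parr_deflation piy.
Qed.

Lemma quotient_form_symmetric : symmetric_form quotient_form.
Proof.
apply/symmetric_formP; split; first exact: quotient_form_morph.
move=> c; have [x [y [c' [_ _ _ qc]]]] := quotient_form_spec c.
by exists c'; split=> //; apply: quotient_form_invol.
Qed.

Lemma quotient_formK : M =1 comp (comp (Pmor pi) quotient_form) pi.
Proof.
move=> x; have := quotient_form_pi x; rewrite /comp.
case pix: (pi x) => [c|] /= qc; last by apply/M_None.
rewrite qc; case Mx: (M x) => [y|] //=.
case piy: (pi y) => [c'|] /=; last by move/M_None: piy; rewrite (M_invol Mx).
by rewrite /Pmor (dualf_eq _ piy) //; case: pi_morph.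
Qed.

End QuotientForm.

Section Reduction.
Variables (Q : quiver) (sg : cinvol Q) (N U A C : rep Q).
Variables (psiN : N -> option (Pobj sg N)) (j : U -> option N) (k : A -> option N).
Variables (i : U -> option A) (pi : A -> option C).
Hypotheses (psiN_sym : symmetric_form psiN) (j_infl : inflation j).
Hypotheses (k_ker : is_kernel k (comp (Pmor j) psiN)) (i_infl : inflation i).
Hypotheses (kij : comp k i =1 j) (pi_coker : is_cokernel pi i).

Local Notation perp_form := (comp (comp (Pmor k) psiN) k).

Let psiN_morph : is_morph psiN.
Proof. by case/symmetric_formP: psiN_sym. Qed.

Let psiN_invol x : exists y, psiN x = Some y /\ psiN y = Some x.
Proof. by case/symmetric_formP: psiN_sym. Qed.

Let orth_morph : is_morph (comp (Pmor j) psiN).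
Proof. by apply: is_morph_comp psiN_morph _; apply: is_morph_Pmor; case: j_infl. Qed.

Let k_infl : inflation k.
Proof. exact: kernel_inflation orth_morph k_ker. Qed.

Lemma perp_form_morph : is_morph perp_form.
Proof.
have [k_morph _] := k_infl.
exact: is_morph_comp k_morph (is_morph_comp psiN_morph (is_morph_Pmor sg k_morph)).
Qed.

Lemma perp_form_invol x y : perp_form x = Some y -> perp_form y = Some x.
Proof.
have [[_ k_inj _] k_tot] := k_infl; have [z kx] := k_tot x.
rewrite /comp kx /=; have [z' [psiz psiz']] := psiN_invol z.
by rewrite psiz /= => /dualfP ky; rewrite ky /= psiz' /= /Pmor (dualf_eq k_inj kx).
Qed.

Lemma perp_form_image x : x \in image_set i -> perp_form x = None.
Proof.
case/image_setP => u iu; have [[_ j_inj _] j_tot] := j_infl; have [w ju] := j_tot u.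
have kx : k x = Some w by have := kij u; rewrite /comp iu /= ju.
have [w' [psiw psiw']] := psiN_invol w.
rewrite /comp kx /= psiw /=; case E: (Pmor k w') => [y|] //; move/dualfP: E => ky.
have [_ orth_k0 _] := k_ker.
by have := orth_k0 y; rewrite /comp ky /= psiw' /= /Pmor (dualf_eq j_inj ju).
Qed.

Lemma perp_form_coimage x : x \notin image_set i -> exists y, perp_form x = Some y.
Proof.
move=> xNI; have [[_ k_inj _] k_tot] := k_infl; have [z kx] := k_tot x.
have [z' [psiz psiz']] := psiN_invol z.
have orth_z' : comp (Pmor j) psiN z' = None.
  rewrite /comp psiz' /= /Pmor; case E: (dualf j z) => [u|] //; move/dualfP: E => ju.
  have [x' iu] := i_infl.2 u.
  have kx' : k x' = Some z by have := kij u; rewrite /comp iu /= ju.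
  case/negP: xNI; apply/image_setP; exists u.
  by rewrite iu (k_inj _ _ _ kx' kx).
have [y ky] := kernel_image orth_morph k_ker orth_z'.
by exists y; rewrite /comp kx /= psiz /= /Pmor (dualf_eq k_inj ky).
Qed.

Lemma perp_form_None x : perp_form x = None <-> pi x = None.
Proof.
have i_morph := i_infl.1.
split=> [Mx | /(cokernel_None i_morph pi_coker x).1]; last exact: perp_form_image.
apply/(cokernel_None i_morph pi_coker x).2/negPn/negP => /perp_form_coimage [y].
by rewrite Mx.
Qed.

Lemma perp_form_descends : exists psiC : C -> option (Pobj sg C),
  [/\ symmetric_form psiC,
      perp_form =1 comp (comp (Pmor pi) psiC) pi &
      forall psi' : C -> option (Pobj sg C), symmetric_form psi' ->
        perp_form =1 comp (comp (Pmor pi) psi') pi -> isometric psiC psi'].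
Proof.
have [pi_morph _ _] := pi_coker.
have pi_onto := cokernel_onto i_infl.1 pi_coker.
have M_morph := perp_form_morph; have M_None := perp_form_None.
have M_invol := perp_form_invol.
have formK : perp_form =1 comp (comp (Pmor pi) (quotient_form pi perp_form)) pi.
  exact: quotient_formK.
exists (quotient_form pi perp_form); split=> //.
  exact: quotient_form_symmetric.
move=> psi' _ e; apply: eq_isometric; apply: Pmor_cancel pi_onto _ => x.
by rewrite -e -formK.
Qed.

End Reduction.

Lemma reduction_assumption_rep (Q : quiver) (sg : cinvol Q) : reduction_assumption sg.
Proof.
move=> N psiN psiN_sym U j j_infl _ A k k_ker i _ kij i_infl C pi pi_coker.
exact: perp_form_descends psiN_sym j_infl k_ker i_infl kij pi_coker.
Qed.

Theorem lemma1p8 (Q : quiver) (sg : cinvol Q) :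
  [/\ combinatorial Q, finite_direct_decomposition Q & reduction_assumption sg].
Proof.
split.
- exact: combinatorial_rep.
- exact: finite_direct_decomposition_rep.
- exact: reduction_assumption_rep.
Qed.
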